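(* Let $n\ge3$, let $A_n\le S_n$ be the alternating group and $\iota_n:A_n\hookrightarrow S_n$ the inclusion. Then $$|\mathsf{Desc}^1(\mathsf T^l_{\iota_n},(A_n,m_{A_n}))|=\begin{cases}1,& n=3,\\ k,& n\in\{4k,4k+1\}\ (k\ge1),\\ k+1,& n\in\{4k+2,4k+3\}\ (k\ge1).\end{cases}$$ (Equivalently, this is the number of conjugacy classes of complements to $A_n$ in $S_n$, which are the subgroups $\{1,\sigma\}$ with $\sigma$ a product of an odd number of disjoint transpositions.)
   Context: For a subgroup $B$ of a group $A$ with inclusion $\imath$, $\mathcal Z^1(\mathsf T^l_{\imath},(B,m_B))$ is identified with the set of maps $q:A\to B$ satisfying (ZL1) $q(1)=1$; (ZL2) $q(ba)=b\,q(a)$ for $b\in B,a\in A$; (ZL3) $q(aa')=q(a\,q(a'))$ for $a,a'\in A$ (the algebra structures on the left $B$-set $B$ for the monad $A\otimes_B-$ on left $B$-sets), and $\mathsf{Desc}^1(\mathsf T^l_{\imath},(B,m_B))$ is its quotient by $q\sim q'$ iff there is $b_0\in B$ with $q(a)b_0=q'(ab_0)$ for all $a\in A$. *)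

From mathcomp Require Import all_boot all_order all_fingroup all_solvable alt.
Set Implicit Arguments. Unset Strict Implicit. Unset Printing Implicit Defensive.
Local Open Scope group_scope.

(* Maps q : A -> B are represented by finite functions gT -> gT that take
   values in B on A and are normalized to 1 outside A (a bijection with the
   set-theoretic maps A -> B). *)
Definition is_map_AB (gT : finGroupType) (A B : {set gT}) (q : {ffun gT -> gT}) :=
  [forall a, if a \in A then q a \in B else q a == 1].

Definition ZL (gT : finGroupType) (A B : {set gT}) (q : {ffun gT -> gT}) : bool :=
  [&& is_map_AB A B q,
      q 1 == 1,
      [forall b in B, forall a in A, q (b * a) == b * q a]
    & [forall a in A, forall a' in A, q (a * a') == q (a * q a')]].

Definition Z1 (gT : finGroupType) (A B : {set gT}) : {set {ffun gT -> gT}} :=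
  [set q | ZL A B q].

Definition desc_rel (gT : finGroupType) (A B : {set gT}) (q q' : {ffun gT -> gT}) : bool :=
  [exists b0 in B, forall a in A, q a * b0 == q' (a * b0)].

Definition Desc1 (gT : finGroupType) (A B : {set gT}) : {set {set {ffun gT -> gT}}} :=
  [set [set q' in Z1 A B | desc_rel A B q q'] | q in Z1 A B].

From mathcomp Require Import all_boot all_order all_fingroup all_solvable alt zify.

(* A cocycle [q] is determined by [s := tau * q tau] for a fixed transposition
   [tau]: [q a = a] for even [a] and [q a = a * s] for odd [a], and [s] is an odd
   involution.  Two cocycles are equivalent iff their involutions are conjugate
   by an even permutation; as [s] centralizes itself, this is conjugacy in S_n,
   i.e. equality of the number [2j] of moved points.  Odd involutions are those
   with [j] odd, so the classes are counted by the odd [j] with [2j <= n], of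
   which there are [(n + 2) / 4]. *)
Set Implicit Arguments. Unset Strict Implicit. Unset Printing Implicit Defensive.
Local Open Scope group_scope.

Section Involutions.

Variable T : finType.
Implicit Types (s u c : {perm T}) (x y : T).

Definition perm_supp s : {set T} := [set x | s x != x].

Lemma perm_on_supp s : perm_on (perm_supp s) s.
Proof. by apply/subsetP=> x /[!inE]. Qed.

Lemma perm_supp_eq0 s : perm_supp s = set0 -> s = 1.
Proof. by move=> s0; apply: (perm_on_id (perm_on_supp s)); rewrite s0 cards0. Qed.

Lemma perm_suppJ s c : perm_supp (s ^ c) = c @: perm_supp s.
Proof.
apply/setP=> y; rewrite -[y](permKV c) mem_imset; last exact: perm_inj.
by rewrite !inE permJ (inj_eq perm_inj).
Qed.

Lemma card_perm_suppJ s c : #|perm_supp (s ^ c)| = #|perm_supp s|.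
Proof. by rewrite perm_suppJ card_imset //; apply: perm_inj. Qed.

Lemma commute_perm_on S c u : perm_on S c -> {in S, forall z, u z = z} -> commute c u.
Proof.
move=> cS uS; apply: perm_onC cS (perm_on_supp u) _.
by rewrite disjoint_subset; apply/subsetP=> z zS; rewrite !inE negbK uS.
Qed.

Lemma commute_tperm u x y : u x = x -> u y = y -> commute (tperm x y) u.
Proof. by move=> ux uy; apply: commute_perm_on (tperm_on x y) _ => z /set2P[]->. Qed.

Lemma perm_supp_tperm_mul u x y : u x = x -> u y = y -> x != y ->
  perm_supp (tperm x y * u) = x |: (y |: perm_supp u).
Proof.
move=> ux uy xy; apply/setP=> z; rewrite !inE permM.
case: tpermP => [->|->|/eqP zx /eqP zy]; first by rewrite uy eqxx eq_sym.
  by rewrite ux eqxx xy orbT.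
by rewrite (negPf zx) (negPf zy).
Qed.

Lemma card_perm_supp_tperm_mul u x y : u x = x -> u y = y -> x != y ->
  #|perm_supp (tperm x y * u)| = #|perm_supp u|.+2.
Proof.
move=> ux uy xy; rewrite perm_supp_tperm_mul // !cardsU1 !inE ux uy eqxx.
by rewrite (negPf xy) eqxx.
Qed.

Lemma tperm_mul_invol u x y : u * u = 1 -> u x = x -> u y = y ->
  (tperm x y * u) * (tperm x y * u) = 1.
Proof.
move=> uu ux uy.
by rewrite -mulgA (mulgA u) -(commute_tperm ux uy) !mulgA tperm2 mul1g uu.
Qed.

Lemma invol_tperm_split s x : s * s = 1 -> x \in perm_supp s ->
  exists2 u : {perm T}, u * u = 1 &
    [/\ u x = x, u (s x) = s x & s = tperm x (s x) * u].
Proof.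
move=> ss sx; have sK : involutive s by move=> y; rewrite -permM ss perm1.
have ts : commute (tperm x (s x)) s.
  by apply/commgP/conjg_fixP; rewrite tpermJ sK tpermC.
exists (tperm x (s x) * s); last by rewrite !permM tpermL tpermR sK tpermKg.
by rewrite -mulgA (mulgA s) -ts -mulgA ss mulg1 tperm2.
Qed.

Lemma card_perm_supp_invol s : s * s = 1 ->
  exists2 j, #|perm_supp s| = j.*2 & odd_perm s = odd j.
Proof.
have [m] := ubnP #|perm_supp s|; elim: m s => // m IH s lt_s ss.
have [s0|[x sx]] := set_0Vmem (perm_supp s).
  by exists 0; rewrite ?s0 ?cards0 // (perm_supp_eq0 s0) odd_perm1.
have [u uu [ux usx es]] := invol_tperm_split ss sx.
have xsx : x != s x by move: sx; rewrite inE eq_sym.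
have card_s : #|perm_supp s| = #|perm_supp u|.+2.
  by rewrite {1}es card_perm_supp_tperm_mul.
have [|j uj oj] := IH u _ uu; first by move: lt_s; rewrite card_s; lia.
by exists j.+1; rewrite ?card_s ?uj // {1}es odd_mul_tperm xsx oj.
Qed.

Lemma perm_on_map2 x y x' y' : x != y -> x' != y' ->
  exists2 c, perm_on [set x; y; x'; y'] c & c x = x' /\ c y = y'.
Proof.
move=> xy x'y'; set y1 := tperm x x' y.
have x'y1 : x' != y1 by rewrite /y1 -{1}(tpermL x x') (inj_eq perm_inj).
exists (tperm x x' * tperm y1 y'); last first.
  by split; rewrite permM -/y1 tpermL // tpermD // eq_sym.
apply: perm_onM; apply: subset_trans (tperm_on _ _) _; apply/subsetP=> z /set2P[]->;
  rewrite ?/y1; try case: tpermP => *; by rewrite !inE eqxx ?orbT.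
Qed.

Lemma invol_conj_of_card s s' : s * s = 1 -> s' * s' = 1 ->
  #|perm_supp s| = #|perm_supp s'| -> exists c, s' = s ^ c.
Proof.
have [m] := ubnP #|perm_supp s|; elim: m s s' => // m IH s s' lt_s ss s's' eq_s.
have [s0|[x sx]] := set_0Vmem (perm_supp s).
  have s'0 : perm_supp s' = set0 by apply/cards0_eq; rewrite -eq_s s0 cards0.
  by exists 1; rewrite (perm_supp_eq0 s0) (perm_supp_eq0 s'0) conjg1.
have [x' s'x'] : exists x', x' \in perm_supp s'.
  by apply/set0Pn; rewrite -card_gt0 -eq_s card_gt0; apply/set0Pn; exists x.
have [u uu [ux usx es]] := invol_tperm_split ss sx.
have [u' u'u' [u'x' u's'x' es']] := invol_tperm_split s's' s'x'.
have xsx : x != s x by move: sx; rewrite inE eq_sym.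
have x's'x' : x' != s' x' by move: s'x'; rewrite inE eq_sym.
have card_s : #|perm_supp s| = #|perm_supp u|.+2.
  by rewrite {1}es card_perm_supp_tperm_mul.
have card_s' : #|perm_supp s'| = #|perm_supp u'|.+2.
  by rewrite {1}es' card_perm_supp_tperm_mul.
have [||d ud] := IH u u' _ uu u'u'; [by move: lt_s; rewrite card_s; lia | lia |].
have u'd y : u y = y -> u' (d y) = d y by rewrite ud permJ => ->.
(* Conjugating by [d] matches the remainders; [c] then moves the remaining pair
   onto [x'], [s' x'] without disturbing [u'], which fixes all four points. *)
have [|c c_on [cx csx]] := perm_on_map2 (x := d x) (y := d (s x)) _ x's'x'.
  by rewrite (inj_eq perm_inj).
have u'c : u' ^ c = u'.
  apply/conjg_fixP/commgP/esym; apply: commute_perm_on c_on _ => z.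
  by rewrite !inE -!orbA => /or4P[]/eqP->; rewrite ?u'd.
exists (d * c).
by rewrite {1}es conjgM (conjMg _ _ d) tpermJ -ud conjMg tpermJ u'c cx csx -es'.
Qed.

Lemma exists_invol_card j : j.*2 <= #|T| ->
  exists2 s, s * s = 1 & #|perm_supp s| = j.*2.
Proof.
elim: j => [|j IH] le_j.
  exists 1; rewrite ?mulg1 //; apply/eqP; rewrite cards_eq0; apply/eqP/setP=> y.
  by rewrite !inE perm1 eqxx.
have [|s ss card_s] := IH; first by move: le_j; rewrite doubleS; lia.
have /card_gt1P[x [y [xs ys xy]]] : 1 < #|~: perm_supp s|.
  by have := cardsC (perm_supp s); move: le_j; rewrite card_s doubleS; lia.
move: xs ys; rewrite !inE !negbK => /eqP sx /eqP sy.
exists (tperm x y * s); first exact: tperm_mul_invol.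
by rewrite card_perm_supp_tperm_mul // card_s.
Qed.

Lemma odd_invol_card_supp_mod4 s : s * s = 1 -> odd_perm s -> #|perm_supp s| %% 4 = 2.
Proof.
move=> ss; have [j -> ->] := card_perm_supp_invol ss => odd_j.
by have := odd_double_half j; rewrite odd_j; lia.
Qed.

Lemma exists_odd_invol_card m : m <= #|T| -> m %% 4 = 2 ->
  exists s, [/\ s * s = 1, odd_perm s & #|perm_supp s| = m].
Proof.
move=> le_m m4; have m_even : m = m./2.*2 by have := odd_double_half m; lia.
have [|s ss card_s] := @exists_invol_card m./2; first by rewrite -m_even.
exists s; split; rewrite ?card_s //.
have [j card_j ->] := card_perm_supp_invol ss.
have -> : j = m./2 by move: card_j; rewrite card_s; lia.
by have := odd_double_half m./2; lia.
Qed.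

End Involutions.

Lemma card_classes_by_key (X K : finType) (Z : {set X}) (R : rel X) (f : X -> K) :
    {in Z &, forall q q', R q q' = (f q == f q')} ->
  #|[set [set q' in Z | R q q'] | q in Z]| = #|f @: Z|.
Proof.
move=> Rf; have -> : [set [set q' in Z | R q q'] | q in Z] =
    [set [set q' in Z | f q' == k] | k in f @: Z].
  rewrite -imset_comp; apply: eq_in_imset => q qZ; apply/setP=> q'; rewrite !inE.
  by case: (boolP (q' \in Z)) => //= q'Z; rewrite Rf // eq_sym.
rewrite card_in_imset // => _ _ /imsetP[q qZ ->] /imsetP[q' q'Z ->] /setP/(_ q).
by rewrite !inE qZ eqxx => /esym/eqP.
Qed.

Lemma card_mod4_eq2 m : #|[set i : 'I_m.+1 | i %% 4 == 2]| = (m + 2) %/ 4.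
Proof.
rewrite -sum1dep_card; transitivity (\sum_(0 <= i < m.+1 | i %% 4 == 2) 1).
  by rewrite big_mkord.
elim: m => [|m IH]; first by rewrite big_mkcond big_nat1.
by rewrite big_mkcond big_nat_recr //= -big_mkcond IH; case: eqP => /= ?; lia.
Qed.

Section SymAltCocycles.

Variable T : finType.
Implicit Types (s a b c : {perm T}) (q : {ffun {perm T} -> {perm T}}).

Let Sym := 'Sym_T.
Let Alt := 'Alt_T.

Lemma mem_Sym a : a \in Sym.
Proof. by rewrite inE. Qed.

Definition cocycle_of s : {ffun {perm T} -> {perm T}} :=
  [ffun a => if odd_perm a then a * s else a].

Lemma cocycle_of_Z1 s : s * s = 1 -> odd_perm s -> cocycle_of s \in Z1 Sym Alt.
Proof.
move=> ss s_odd; rewrite inE; apply/and4P; split.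
- apply/forallP=> a; rewrite mem_Sym ffunE Alt_even.
  by case: ifP => a_odd; rewrite ?odd_permM a_odd ?s_odd.
- by rewrite ffunE odd_perm1.
- apply/forall_inP=> b; rewrite Alt_even => b_even; apply/forall_inP=> a _.
  by rewrite !ffunE odd_permM (negPf b_even) /=; case: ifP; rewrite ?mulgA.
apply/forall_inP=> a _; apply/forall_inP=> a' _; rewrite !ffunE.
case: (boolP (odd_perm a')) => // a'_odd; rewrite !odd_permM a'_odd s_odd /=.
by case: (odd_perm a); rewrite /= !mulgA // -(mulgA _ s) ss mulg1.
Qed.

Lemma desc_rel_cocycle_of s s' : odd_perm s ->
  desc_rel Sym Alt (cocycle_of s) (cocycle_of s') = [exists b in Alt, s' == s ^ b].
Proof.
move=> s_odd; apply/exists_inP/exists_inP=> -[b b_Alt sb]; exists b => //;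
  move: b_Alt; rewrite Alt_even => /negPf b_even.
  move/forall_inP/(_ s (mem_Sym s))/eqP: sb.
  rewrite !ffunE odd_permM s_odd b_even /= -!mulgA => /mulgI sb.
  by rewrite conjgE sb mulKg.
apply/forall_inP=> a _; rewrite !ffunE odd_permM b_even addbF.
by case: ifP => // _; apply/eqP; rewrite (eqP sb) conjgE -[in RHS]mulgA mulKVg mulgA.
Qed.

Lemma conj_Alt_odd s s' c : odd_perm s -> s' = s ^ c ->
  exists2 b, b \in Alt & s' = s ^ b.
Proof.
move=> s_odd ->; case: (boolP (odd_perm c)) => c_odd.
  (* [s] centralizes itself, so the odd conjugator [c] may be replaced by [s * c]. *)
  exists (s * c); first by rewrite Alt_even odd_permM s_odd c_odd.
  by rewrite conjgM (conjgE s s) mulKg.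
by exists c; rewrite ?Alt_even.
Qed.

Lemma desc_rel_cocycle_ofE s s' : s * s = 1 -> s' * s' = 1 -> odd_perm s ->
  desc_rel Sym Alt (cocycle_of s) (cocycle_of s') = (#|perm_supp s| == #|perm_supp s'|).
Proof.
move=> ss s's' s_odd; rewrite desc_rel_cocycle_of //; apply/exists_inP/eqP.
  by case=> b _ /eqP->; rewrite card_perm_suppJ.
move=> /(invol_conj_of_card ss s's')[c /(conj_Alt_odd s_odd)][b b_Alt sb].
by exists b; rewrite ?sb.
Qed.

Section FixedOddInvolution.

Variable tau : {perm T}.
Hypotheses (tau_invol : tau * tau = 1) (tau_odd : odd_perm tau).

Lemma Z1_cocycle_of q : q \in Z1 Sym Alt ->
  exists2 s, s * s = 1 /\ odd_perm s & q = cocycle_of s.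
Proof.
rewrite inE => /and4P[/forallP q_Alt /eqP q1 /forall_inP qL /forall_inP qM].
have qL1 b : b \in Alt -> q b = b.
  move=> b_Alt; move/forall_inP/(_ _ (mem_Sym 1))/eqP: (qL b b_Alt).
  by rewrite q1 !mulg1.
have qL_tau a : odd_perm a -> q a = a * (tau * q tau).
  move=> a_odd; have a_tau : a * tau \in Alt.
    by rewrite Alt_even odd_permM a_odd tau_odd.
  move/forall_inP/(_ tau (mem_Sym tau))/eqP: (qL _ a_tau).
  by rewrite -mulgA tau_invol mulg1 mulgA.
have s_odd : odd_perm (tau * q tau).
  by have := q_Alt tau; rewrite mem_Sym Alt_even odd_permM tau_odd => /negPf->.
exists (tau * q tau); last first.
  apply/ffunP=> a; rewrite ffunE; case: ifPn => [/qL_tau // | a_even].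
  by apply: qL1; rewrite Alt_even.
split=> //; move/forall_inP/(_ tau (mem_Sym tau))/eqP: (qM tau (mem_Sym tau)).
by rewrite tau_invol q1 (qL_tau _ s_odd).
Qed.

Lemma cocycle_of_tau s : tau * cocycle_of s tau = s.
Proof. by rewrite ffunE tau_odd mulgA tau_invol mul1g. Qed.

End FixedOddInvolution.

End SymAltCocycles.

Lemma card_Desc1_Sym_Alt (T : finType) : 1 < #|T| ->
  #|Desc1 'Sym_T 'Alt_T| = (#|T| + 2) %/ 4.
Proof.
case/card_gt1P=> x [y [_ _ xy]]; set tau := tperm x y.
have tau_invol : tau * tau = 1 := tperm2 x y.
have tau_odd : odd_perm tau by rewrite odd_tperm.
have Z1E := Z1_cocycle_of tau_invol tau_odd.
have supp_lt (s : {perm T}) : #|perm_supp s| < #|T|.+1 by rewrite ltnS max_card.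
pose key (q : {ffun {perm T} -> {perm T}}) : 'I_#|T|.+1 :=
  inord #|perm_supp (tau * q tau)|.
have key_of (s : {perm T}) : key (cocycle_of s) = inord #|perm_supp s|.
  by rewrite /key cocycle_of_tau.
rewrite /Desc1 (@card_classes_by_key _ _ _ _ key); last first.
  move=> _ _ /Z1E[s [ss s_odd] ->] /Z1E[s' [s's' _] ->].
  rewrite desc_rel_cocycle_ofE // !key_of; apply/eqP/eqP => [-> // |].
  by move/(congr1 val); rewrite /= !inordK.
rewrite -card_mod4_eq2; apply: eq_card => i; rewrite inE; apply/imsetP/idP.
  case=> q /Z1E[s [ss s_odd] ->] ->.
  by rewrite key_of inordK // odd_invol_card_supp_mod4.
move=> /eqP i_mod.
have [|s [ss s_odd card_s]] := @exists_odd_invol_card T i _ i_mod.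
  by rewrite -ltnS.
by exists (cocycle_of s); rewrite ?cocycle_of_Z1 // key_of card_s inord_val.
Qed.

Local Close Scope group_scope.

Theorem mainTheorem18 (n : nat) (hn : 3 <= n) :
  let D := #|Desc1 ('Sym_('I_n))%g ('Alt_('I_n))%g| in
  [/\ n = 3 -> D = 1,
      forall k, 1 <= k -> (n = 4 * k \/ n = 4 * k + 1) -> D = k
    & forall k, 1 <= k -> (n = 4 * k + 2 \/ n = 4 * k + 3) -> D = k + 1].
Proof.
rewrite /= card_Desc1_Sym_Alt card_ord; last by lia.
by split=> [-> | k _ [->|->] | k _ [->|->]]; lia.
Qed.
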